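(* Let $m>a\geq0$, $n>b\geq0$, $h\geq0$ be integers with $h\leq (m-a)(n-b)-\max\{m-a,n-b\}$, and let $N=mn$. For any $\mathcal{E}'\in\mathbb{E}^{\max}_{m\times n}(a,b,0)$ and any $[N,k]$ code $\mathcal{C}\in\mathbb{C}^{\mathsf{MR}}_{m\times n}(a,b,h)$, the code $\mathcal{C}|_{([m]\times[n])\setminus\mathcal{E}'}$ (obtained by restricting every codeword to the positions outside $\mathcal{E}'$) is an $[N-|\mathcal{E}'|,k,h+1]$ MDS code.
   Context: Positions of vectors in $\mathbb{F}^{mn}$ are identified with the grid $[m]\times[n]$, where $[k]=\{1,\dots,k\}$. For linear codes $\mathcal{C}_1\subseteq\mathbb{F}^m$, $\mathcal{C}_2\subseteq\mathbb{F}^n$ with generator matrices $\mathbf{G}_1,\mathbf{G}_2$, $\mathcal{C}_1\otimes\mathcal{C}_2$ is the row span of $\mathbf{G}_1\otimes\mathbf{G}_2$. A code for the topology $T_{m\times n}(a,b,h)$ is a linear code over a finite field $\mathbb{F}$ with a parity-check matrix $\begin{pmatrix}\mathbf{H}_{\mathsf{local}}\\ \mathbf{H}_{\mathsf{global}}\end{pmatrix}$, where $\mathbf{H}_{\mathsf{local}}$ is a parity-check matrix of $\mathcal{C}_{\mathsf{col}}\otimes\mathcal{C}_{\mathsf{row}}$ for some linear $[m,\geq m-a]$ code $\mathcal{C}_{\mathsf{col}}$ and $[n,\geq n-b]$ code $\mathcal{C}_{\mathsf{row}}$ over $\mathbb{F}$, and $\mathbf{H}_{\mathsf{global}}$ is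 an arbitrary $h\times mn$ matrix; $\mathbb{C}_{m\times n}(a,b,h)$ is the set of all such codes (over any finite field). A code corrects an erasure pattern $\mathcal{E}\subseteq[m]\times[n]$ if no two distinct codewords agree on all positions outside $\mathcal{E}$. $\mathcal{E}$ is correctable in $T_{m\times n}(a,b,h)$ if some code in $\mathbb{C}_{m\times n}(a,b,h)$ corrects it; $\mathbb{E}_{m\times n}(a,b,h)$ is the set of such patterns, $\mathbb{E}^{\max}_{m\times n}(a,b,h)$ the set of those not properly contained in another correctable pattern. A code in $\mathbb{C}_{m\times n}(a,b,h)$ is maximally recoverable (MR) if it corrects every pattern in $\mathbb{E}_{m\times n}(a,b,h)$; $\mathbb{C}^{\mathsf{MR}}_{m\times n}(a,b,h)$ is the set of MR codes. *)

From HB Require Import structures.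
From mathcomp Require Import all_boot all_order all_algebra.
Set Implicit Arguments. Unset Strict Implicit. Unset Printing Implicit Defensive.
Import GRing.Theory.
Local Open Scope ring_scope.

(* Words of length N = m*n are m x n matrices: position (i,j) of the grid
   [m] x [n] is the matrix entry (i,j).  Linear codes are subspaces. *)

Section Codes.
Variables (F : finFieldType) (m n : nat).

(* C1 (x) C2 : span of the rows of G1 (x) G2, i.e. of all u^T v with
   u, v ranging over bases (generator matrices) of C1, C2. *)
Definition tensor_code (C1 : {vspace 'rV[F]_m}) (C2 : {vspace 'rV[F]_n})
  : {vspace 'M[F]_(m, n)} :=
  <<[seq (u^T *m v) | u <- vbasis C1, v <- vbasis C2]>>%VS.

(* C is a code for the topology T_{m x n}(a,b,h): its parity-check matrix is
   (H_local ; H_global), H_local a parity-check matrix of C_col (x) C_row. *)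
Definition in_topology (a b h : nat) (C : {vspace 'M[F]_(m, n)}) : Prop :=
  exists (Ccol : {vspace 'rV[F]_m}) (Crow : {vspace 'rV[F]_n})
         (Hg : 'M[F]_(h, m * n)),
    [/\ (m - a <= \dim Ccol)%N, (n - b <= \dim Crow)%N &
        forall X : 'M[F]_(m, n),
          (X \in C) = (X \in tensor_code Ccol Crow) && (Hg *m (mxvec X)^T == 0)].

Definition corrects (C : {vspace 'M[F]_(m, n)}) (E : {set 'I_m * 'I_n}) : Prop :=
  forall X Y, X \in C -> Y \in C ->
    (forall i j, (i, j) \notin E -> X i j = Y i j) -> X = Y.

(* restriction to S: coordinates outside S are deleted (here: set to 0) *)
Definition mask (S : {set 'I_m * 'I_n}) (X : 'M[F]_(m, n)) : 'M[F]_(m, n) :=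
  \matrix_(i, j) if (i, j) \in S then X i j else 0.

Definition restr_code (S : {set 'I_m * 'I_n}) (C : {vspace 'M[F]_(m, n)})
  : {vspace 'M[F]_(m, n)} := <<map (mask S) (vbasis C)>>%VS.

Definition wt (X : 'M[F]_(m, n)) : nat := #|[set p : 'I_m * 'I_n | X p.1 p.2 != 0]|.

Definition min_dist (D : {vspace 'M[F]_(m, n)}) (d : nat) : Prop :=
  (exists2 X, X \in D & (X != 0) && (wt X == d)) /\
  (forall X, X \in D -> X != 0 -> (d <= wt X)%N).

End Codes.

Definition correctable (m n a b h : nat) (E : {set 'I_m * 'I_n}) : Prop :=
  exists (F : finFieldType) (C : {vspace 'M[F]_(m, n)}),
    in_topology a b h C /\ corrects C E.

Definition max_correctable (m n a b h : nat) (E : {set 'I_m * 'I_n}) : Prop :=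
  correctable a b h E /\
  forall E2 : {set 'I_m * 'I_n}, E \proper E2 -> ~ correctable a b h E2.

Definition is_MR (F : finFieldType) (m n a b h : nat) (C : {vspace 'M[F]_(m, n)}) : Prop :=
  in_topology a b h C /\
  forall E : {set 'I_m * 'I_n}, correctable a b h E -> corrects C E.

(* A maximal correctable pattern E' of T(a,b,0) leaves exactly (m-a)(n-b)
   positions: a tensor code of that dimension corrects E', so at least that many
   positions survive, and if more survived, some unit vector supported off E'
   would lie outside the punctured tensor code, and E' could be enlarged by its
   position.  Global parity checks reading off h further positions S show that
   E' :|: S is correctable in T(a,b,h), so the MR code C corrects it: the
   punctured code D has dimension k and all its nonzero words weigh more than h.
   As C has codimension at most h in a tensor code of dimension at least
   (m-a)(n-b), the Singleton bound for D is attained. *)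

From Pilot Require Import Defs.
From HB Require Import structures.
From mathcomp Require Import all_boot all_order all_algebra.
From mathcomp Require Import zify.
Set Implicit Arguments. Unset Strict Implicit. Unset Printing Implicit Defensive.
Import GRing.Theory.
Local Open Scope ring_scope.

Lemma exists_subset_card (T : finType) (A : {set T}) k :
  (k <= #|A|)%N -> exists2 S : {set T}, S \subset A & #|S| = k.
Proof.
case/card_geqP=> s [uniq_s size_s sA]; exists [set x in s].
  by apply/subsetP=> x; rewrite inE; apply: sA.
by rewrite cardsE -size_s; apply/card_uniqP.
Qed.

Lemma exists_subv_dim (K : fieldType) (vT : vectType K) (U : {vspace vT}) k :
  (k <= \dim U)%N -> exists2 V : {vspace vT}, (V <= U)%VS & \dim V = k.
Proof.
move=> kU; exists <<take k (vbasis U)>>%VS.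
  by apply/span_subvP=> x /mem_take; apply: vbasis_mem.
have /eqP-> : free (take k (vbasis U)).
  apply: (@catl_free _ _ (drop k (vbasis U))).
  by rewrite cat_take_drop; apply: basis_free (vbasisP U).
by rewrite size_take size_tuple; case: ltnP => // Uk; apply/eqP; rewrite eqn_leq Uk.
Qed.

Section Support.
Variables (F : finFieldType) (m n : nat).
Implicit Types (X Y : 'M[F]_(m, n)) (S T E : {set 'I_m * 'I_n}) (C D : {vspace 'M[F]_(m, n)}).

Definition supp X := [set p | X p.1 p.2 != 0].

Lemma supp_eq0 X : (supp X == set0) = (X == 0).
Proof.
apply/eqP/eqP=> [X0|->]; last by apply/setP=> p; rewrite !inE mxE eqxx.
apply/matrixP=> i j; rewrite mxE; apply/eqP; apply/negPn/negP=> nz.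
by have := in_set0 (i, j); rewrite -X0 inE nz.
Qed.

Lemma supp_mask S X : supp (Defs.mask S X) = S :&: supp X.
Proof. by apply/setP=> -[i j]; rewrite !inE mxE; case: ((i, j) \in S); rewrite ?eqxx. Qed.

Lemma mask_supp S X : supp X \subset S -> Defs.mask S X = X.
Proof.
move/subsetP=> sXS; apply/matrixP=> i j; rewrite mxE; case: ifP => // ijS.
by apply/esym/eqP; apply: contraFT ijS => nz; apply: sXS; rewrite inE.
Qed.

Lemma mask_eq0 S X : (Defs.mask S X == 0) = (supp X \subset ~: S).
Proof. by rewrite -supp_eq0 supp_mask setI_eq0 disjoint_sym disjoints_subset. Qed.

Lemma mask_sum S X :
  Defs.mask S X = \sum_(p in S) X p.1 p.2 *: delta_mx p.1 p.2.
Proof.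
apply/matrixP=> i j; rewrite summxE mxE.
rewrite (eq_bigr (fun p => if p == (i, j) then X i j else 0)) => [|[i' j'] _]; last first.
  by rewrite !mxE -xpair_eqE eq_sym; case: eqP => [[-> ->]|_]; rewrite ?mulr1 ?mulr0.
rewrite -big_mkcondr /=; case: ifP => ijS.
  by rewrite (big_pred1 (i, j)) // => p /=; case: eqP => [->|]; rewrite ?ijS ?andbF.
by rewrite big_pred0 // => p; case: eqP => [->|]; rewrite ?ijS ?andbF.
Qed.

Lemma mask_set1 p X : Defs.mask [set p] X = X p.1 p.2 *: delta_mx p.1 p.2.
Proof. by rewrite mask_sum big_set1. Qed.

Lemma add_mask_setC S X : Defs.mask S X + Defs.mask (~: S) X = X.
Proof.
by apply/matrixP=> i j; rewrite !mxE inE; case: ((i, j) \in S); rewrite ?addr0 ?add0r.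
Qed.

Lemma mask_is_linear S : linear (@Defs.mask F m n S).
Proof.
by move=> c X Y; apply/matrixP=> i j; rewrite !mxE; case: ifP; rewrite ?mulr0 ?addr0.
Qed.

HB.instance Definition _ S := GRing.isLinear.Build F 'M[F]_(m, n) 'M[F]_(m, n) _
  (@Defs.mask F m n S) (mask_is_linear S).

Definition mask_lfun S : 'End('M[F]_(m, n)) := linfun (Defs.mask S).

Lemma mask_lfunE S X : mask_lfun S X = Defs.mask S X.
Proof. exact: lfunE. Qed.

Definition supp_space S : {vspace 'M[F]_(m, n)} :=
  <<[seq delta_mx p.1 p.2 | p <- enum S]>>%VS.

Lemma mem_supp_space S X : supp X \subset S -> X \in supp_space S.
Proof.
move/mask_supp <-; rewrite mask_sum; apply: rpred_sum => p pS; apply: memvZ.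
by apply: memv_span; apply: map_f; rewrite mem_enum.
Qed.

Lemma dim_supp_space S : \dim (supp_space S) = #|S|.
Proof.
have le_dim T : (\dim (supp_space T) <= #|T|)%N.
  by rewrite (leq_trans (dim_span _)) // size_map cardE.
apply/anti_leq; rewrite le_dim /=.
have full : (fullv <= supp_space S + supp_space (~: S))%VS.
  apply/subvP=> X _; rewrite -(add_mask_setC S X).
  by apply: memv_add; apply: mem_supp_space; rewrite supp_mask subsetIl.
have dimM : dim 'M[F]_(m, n) = (#|S| + #|~: S|)%N.
  by rewrite cardsC card_prod !card_ord.
have := leq_trans (dimvS full) (dimv_add_leqif _ _); rewrite dimvf dimM.
by move/leq_trans/(_ (leq_add (leqnn _) (le_dim _))); rewrite leq_add2r.
Qed.

Lemma low_weight_word D T s :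
  {in D, forall Y, supp Y \subset T} -> (s <= #|T|)%N -> (#|T| - s < \dim D)%N ->
  exists2 Y, Y \in D & (Y != 0) && (wt Y <= s)%N.
Proof.
move=> suppD sT ltD; have [S sST cardS] := exists_subset_card sT.
set Q := T :\: S.
have kerQ : (0 < \dim (D :&: lker (mask_lfun Q)))%N.
  have imQ : (\dim (mask_lfun Q @: D) <= #|Q|)%N.
    rewrite -dim_supp_space; apply: dimvS; apply/subvP=> _ /memv_imgP[X _ ->].
    by rewrite mask_lfunE mem_supp_space // supp_mask subsetIl.
  rewrite lt0n; apply: contraTneq ltD => ker0.
  rewrite -leqNgt -(limg_ker_dim (mask_lfun Q) D) ker0 (leq_trans imQ) //.
  by rewrite cardsDS // cardS.
have := memv_pick (D :&: lker (mask_lfun Q)); set Y := vpick _.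
rewrite memv_cap memv_ker mask_lfunE mask_eq0 => /andP[YD suppYQ].
exists Y => //; rewrite vpick0 -dimv_eq0 -lt0n kerQ -cardS /=.
apply: subset_leq_card; apply/subsetP=> p pY; move/subsetP: suppYQ => /(_ p pY).
by rewrite !inE (subsetP (suppD _ YD)) // andbT negbK.
Qed.

Lemma mds_of_dim D T h :
  {in D, forall Y, supp Y \subset T} -> {in D, forall Y, Y != 0 -> (h < wt Y)%N} ->
  (#|T| <= \dim D + h)%N -> (h < #|T|)%N ->
  (\dim D + h)%N = #|T| /\ min_dist D h.+1.
Proof.
move=> suppD wtD leT ltT.
have leD : ~~ (#|T| - h < \dim D)%N. (* Singleton bound *)
  apply/negP=> /(low_weight_word suppD (ltnW ltT))[Y YD /andP[nzY wtY]].
  by have := wtD Y YD nzY; rewrite ltnNge wtY.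
have dimD : (\dim D + h)%N = #|T| by lia.
split=> //; split=> [|Y YD nzY]; last exact: wtD.
have [|Y YD /andP[nzY wtY]] := low_weight_word suppD ltT (s := h.+1); first lia.
by exists Y => //; rewrite nzY eqn_leq wtY; apply: wtD.
Qed.

Lemma restr_codeE S C : restr_code S C = (mask_lfun S @: C)%VS.
Proof.
rewrite /restr_code -[in RHS](span_basis (vbasisP C)) limg_span.
by congr <<_>>%VS; apply: eq_map => X; rewrite mask_lfunE.
Qed.

Lemma restr_codeP S C Y :
  reflect (exists2 X, X \in C & Y = Defs.mask S X) (Y \in restr_code S C).
Proof.
by rewrite restr_codeE; apply: (iffP memv_imgP) => -[X XC ->]; exists X; rewrite ?mask_lfunE.
Qed.

Lemma supp_restr_code S C Y : Y \in restr_code S C -> supp Y \subset S.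
Proof. by case/restr_codeP=> X _ ->; rewrite supp_mask subsetIl. Qed.

Lemma correctsP C E : corrects C E <-> {in C, forall X, supp X \subset E -> X = 0}.
Proof.
split=> [corrC X XC sXE | corrC X Y XC YC eqXY].
  apply: corrC XC (mem0v _) _ => i j ijE; rewrite mxE; apply/eqP.
  by apply: contraR ijE => nz; apply: (subsetP sXE); rewrite inE.
apply/eqP; rewrite -subr_eq0; apply/eqP/corrC; first exact: memvB.
by apply/subsetP=> -[i j]; rewrite inE !mxE; apply: contraR => ijE; rewrite eqXY ?subrr.
Qed.

Lemma correctsS C D E : (D <= C)%VS -> corrects C E -> corrects D E.
Proof. by move=> /subvP sDC /correctsP corrC; apply/correctsP=> X /sDC; apply: corrC. Qed.

Lemma dim_restr_code C E : corrects C E -> \dim (restr_code (~: E) C) = \dim C.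
Proof.
move/correctsP=> corrC; rewrite restr_codeE limg_dim_eq //; apply/eqP; rewrite -subv0.
apply/subvP=> X; rewrite memv_cap memv_ker mask_lfunE mask_eq0 setCK memv0.
by case/andP=> XC sXE; rewrite (corrC X XC sXE).
Qed.

Lemma wt_restr_code_gt C E h Y :
  (forall S, #|S| <= h -> corrects C (E :|: S))%N ->
  Y \in restr_code (~: E) C -> Y != 0 -> (h < wt Y)%N.
Proof.
move=> corrCES /restr_codeP[X XC ->{Y}] nzY; rewrite ltnNge; apply: contra nzY => wtY.
have /correctsP corrC := corrCES (supp (Defs.mask (~: E) X)) wtY.
rewrite (corrC X XC) ?linear0 //.
by apply/subsetP=> p; rewrite supp_mask !inE => ->; rewrite andbT orbN.
Qed.

Lemma corrects_setU1 C E p :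
  corrects C E -> delta_mx p.1 p.2 \notin restr_code (~: E) C -> corrects C (p |: E).
Proof.
move=> /correctsP corrC notW; apply/correctsP=> X XC sXpE.
set Y := Defs.mask (~: E) X.
have sYp : supp Y \subset [set p].
  apply/subsetP=> q; rewrite supp_mask in_setI in_setC => /andP[qE /(subsetP sXpE)].
  by rewrite in_setU1 (negbTE qE) orbF in_set1.
have Ydelta : Y = Y p.1 p.2 *: delta_mx p.1 p.2 by rewrite -mask_set1 mask_supp.
have /eqP : Y = 0.
  have [Yp0|nzYp] := eqVneq (Y p.1 p.2) 0; first by rewrite Ydelta Yp0 scale0r.
  case/negP: notW; suff -> : delta_mx p.1 p.2 = (Y p.1 p.2)^-1 *: Y.
    by rewrite memvZ //; apply/restr_codeP; exists X.
  by rewrite {2}Ydelta scalerA mulVf ?scale1r.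
by rewrite mask_eq0 setCK; apply: corrC.
Qed.
End Support.

Section Tensor.
Variable F : finFieldType.

Definition vbasis_mx k (U : {vspace 'rV[F]_k}) : 'M[F]_(\dim U, k) :=
  \matrix_i (vbasis U)`_i.

Lemma vbasis_mx_inj k (U : {vspace 'rV[F]_k}) p (Y : 'M_(p, \dim U)) :
  Y *m vbasis_mx U = 0 -> Y = 0.
Proof.
move=> YU0; apply/row_matrixP=> r; apply/rowP=> i; rewrite !mxE.
have /freeP freeU := basis_free (vbasisP U); move: i; apply: (freeU (Y r)).
transitivity (row r (Y *m vbasis_mx U)); last by rewrite YU0 row0.
by rewrite row_mul mulmx_sum_row; apply: eq_bigr => i _; rewrite rowK mxE.
Qed.

Variables (m n : nat).
Implicit Types (U : {vspace 'rV[F]_m}) (V : {vspace 'rV[F]_n}).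

Lemma tensor_code_mem U V u v :
  u \in U -> v \in V -> u^T *m v \in tensor_code U V.
Proof.
move=> /coord_vbasis -> /coord_vbasis ->.
rewrite linear_sum; apply: rpred_sum => j _.
rewrite linear_sum /= mulmx_suml; apply: rpred_sum => i _.
rewrite [_^T]linearZ -scalemxAl -scalemxAr; do 2!apply: memvZ.
apply/memv_span/allpairsP; exists ((vbasis U)`_i, (vbasis V)`_j).
by rewrite !mem_nth ?size_tuple.
Qed.

Lemma tensor_codeS U U' V V' :
  (U <= U')%VS -> (V <= V')%VS -> (tensor_code U V <= tensor_code U' V')%VS.
Proof.
move=> /subvP sU /subvP sV; apply/span_subvP=> _ /allpairsP[[u v] /= [uC vC ->]].
by apply: tensor_code_mem; [apply/sU/vbasis_mem | apply/sV/vbasis_mem].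
Qed.

Lemma dim_tensor_code U V : \dim (tensor_code U V) = (\dim U * \dim V)%N.
Proof.
apply/anti_leq; rewrite (leq_trans (dim_span _)) ?size_allpairs ?size_tuple //=.
set GU := vbasis_mx U; set GV := vbasis_mx V.
pose f : 'Hom('M[F]_(\dim U, \dim V), 'M[F]_(m, n)) := linfun (mulmxr GV \o mulmx GU^T).
have fE c : f c = GU^T *m c *m GV by rewrite lfunE.
have -> : (\dim U * \dim V)%N = \dim (f @: fullv).
  rewrite limg_dim_eq ?dimvf //; apply/eqP; rewrite -subv0; apply/subvP=> c.
  rewrite memv_cap memv_ker memv0 fE => /andP[_ /eqP/vbasis_mx_inj/(congr1 trmx)].
  by rewrite trmx_mul trmxK trmx0 => /vbasis_mx_inj/(congr1 trmx); rewrite trmxK trmx0 => ->.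
apply: dimvS; apply/subvP=> _ /memv_imgP[c _ ->]; rewrite fE (matrix_sum_delta c).
rewrite mulmx_sumr mulmx_suml; apply: rpred_sum => i _.
rewrite mulmx_sumr mulmx_suml; apply: rpred_sum => j _.
rewrite -scalemxAr -scalemxAl; apply: memvZ.
have -> : GU^T *m delta_mx i j *m GV = (row i GU)^T *m row j GV.
  by rewrite !rowE trmx_mul trmx_delta -(mul_delta_mx (0 : 'I_1)) !mulmxA.
by apply: tensor_code_mem; rewrite rowK vbasis_mem ?mem_nth ?size_tuple.
Qed.
End Tensor.

Section Topology.
Variables (m n a b : nat).
Implicit Types E S : {set 'I_m * 'I_n}.

Definition check_lfun (F : finFieldType) h (H : 'M[F]_(h, m * n)) :
  'Hom('M[F]_(m, n), 'M[F]_(h, 1)) := linfun (mulmx H \o trmx \o mxvec).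

Lemma in_topologyP (F : finFieldType) h (C : {vspace 'M[F]_(m, n)}) :
  in_topology a b h C <->
  exists U V (H : 'M[F]_(h, m * n)), [/\ m - a <= \dim U, n - b <= \dim V &
    C = (tensor_code U V :&: lker (check_lfun H))%VS]%N.
Proof.
split=> -[U [V [H [dU dV defC]]]]; exists U, V, H; split=> //.
  by apply/vspaceP=> X; rewrite defC memv_cap memv_ker lfunE.
by move=> X; rewrite defC memv_cap memv_ker lfunE.
Qed.

Lemma in_topology0P (F : finFieldType) (C : {vspace 'M[F]_(m, n)}) :
  in_topology a b 0 C <->
  exists U V, [/\ m - a <= \dim U, n - b <= \dim V & C = tensor_code U V]%N.
Proof.
split=> [/in_topologyP[U [V [H [dU dV ->]]]] | [U [V [dU dV ->]]]].
  exists U, V; split=> //; apply/vspaceP=> X.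
  by rewrite memv_cap memv_ker lfunE flatmx0 eqxx andbT.
by exists U, V, 0; split=> // X; rewrite mul0mx eqxx andbT.
Qed.

Lemma in_topology_dim (F : finFieldType) h (C : {vspace 'M[F]_(m, n)}) :
  in_topology a b h C -> ((m - a) * (n - b) <= \dim C + h)%N.
Proof.
case/in_topologyP=> U [V [H [dU dV ->]]].
have dim_img : (\dim (check_lfun H @: tensor_code U V) <= h)%N.
  by rewrite (leq_trans (dimvS (subvf _))) // dimvf /dim /= muln1.
rewrite (leq_trans (leq_mul dU dV)) // -dim_tensor_code.
by rewrite -(limg_ker_dim (check_lfun H) (tensor_code U V)) leq_add2l.
Qed.

Lemma correctable_setU h E S :
  correctable a b 0 E -> (#|S| <= h)%N -> correctable a b h (E :|: S).
Proof.
case=> F [C [/in_topology0P[U [V [dU dV ->]]] /correctsP corrE]] leSh.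
(* row [r] of [H] reads off the [r]-th position of [S]; rows past [#|S|] vanish *)
pose chk (r : 'I_h) : 'rV[F]_(m * n) :=
  if insub (val r) is Some s then
    mxvec (delta_mx (@enum_val _ (mem S) s).1 (enum_val s).2)
  else 0.
pose H := \matrix_r chk r.
exists F, (tensor_code U V :&: lker (check_lfun H))%VS; split.
  by apply/in_topologyP; exists U, V, H.
apply/correctsP=> Z; rewrite memv_cap memv_ker lfunE /= => /andP[ZT /eqP HZ] sZES.
apply: corrE ZT _; apply/subsetP=> p pZ; have := subsetP sZES p pZ.
rewrite in_setU => /orP[// | pS]; move: pZ; rewrite inE; apply: contraR => _.
pose r := widen_ord leSh (enum_rank_in pS p).
have /(congr1 (fun M => row r M 0 0)) : H *m (mxvec Z)^T = 0 := HZ.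
rewrite row_mul rowK /chk /= valK enum_rankK_in // mxvec_delta -rowE !mxE.
by rewrite mxvecE => ->.
Qed.

Lemma card_compl_le_dim (F : finFieldType) h (T : {vspace 'M[F]_(m, n)}) E :
  max_correctable a b h E -> in_topology a b h T -> corrects T E ->
  (#|~: E| <= \dim T)%N.
Proof.
case=> _ maxE topT corrT; rewrite leqNgt; apply/negP=> ltT.
have /allPn[_ /mapP[p pE ->] notW] :
    ~~ all (mem (restr_code (~: E) T)) [seq delta_mx p.1 p.2 | p <- enum (~: E)].
  apply: contraL ltT => /allP/span_subvP/dimvS.
  by rewrite dim_supp_space dim_restr_code // -leqNgt.
apply: (maxE (p |: E)); last by exists F, T; split=> //; apply: corrects_setU1.
by apply: properUr; rewrite sub1set -in_setC -mem_enum.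
Qed.

Lemma card_compl_max_correctable E :
  max_correctable a b 0 E -> #|~: E| = ((m - a) * (n - b))%N.
Proof.
move=> maxE; have [[F [C [topC corrC]]] _] := maxE.
have [U0 [V0 [dU0 dV0 defC]]] := (in_topology0P C).1 topC.
have [U sUU0 dU] := exists_subv_dim dU0.
have [V sVV0 dV] := exists_subv_dim dV0.
have corrT : corrects (tensor_code U V) E.
  by apply: correctsS corrC; rewrite defC tensor_codeS.
have topT : in_topology a b 0 (tensor_code U V).
  by apply/in_topology0P; exists U, V; rewrite dU dV.
apply/anti_leq; rewrite -dU -dV -dim_tensor_code (card_compl_le_dim maxE topT corrT) /=.
rewrite -(dim_restr_code corrT) -(dim_supp_space F) dimvS //.
by apply/subvP=> Y /supp_restr_code/mem_supp_space.
Qed.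
End Topology.

Local Close Scope ring_scope.

Theorem corollary1 (m n a b h : nat) :
  a < m -> b < n -> h <= (m - a) * (n - b) - maxn (m - a) (n - b) ->
  forall E' : {set 'I_m * 'I_n}, max_correctable a b 0 E' ->
  forall (F : finFieldType) (C : {vspace 'M[F]_(m, n)}) (k : nat),
    \dim C = k -> is_MR a b h C ->
    let D := restr_code (~: E') C in
    [/\ \dim D = k, min_dist D h.+1 & h.+1 = (m * n - #|E'|) - k + 1].
Proof.
move=> lt_am lt_bn le_h E' maxE' F C k dimC [topC MR_C] D.
have corrCES (S : {set 'I_m * 'I_n}) : #|S| <= h -> corrects C (E' :|: S).
  by move=> leSh; apply: MR_C; apply: correctable_setU leSh; case: maxE'.
have corrCE : corrects C E' by have := corrCES set0; rewrite setU0 cards0; apply.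
have cardE' : #|~: E'| = (m - a) * (n - b) := card_compl_max_correctable maxE'.
have dimD : \dim D = k by rewrite dim_restr_code.
have [dimDh mdsD] : \dim D + h = #|~: E'| /\ min_dist D h.+1.
  apply: mds_of_dim.
  - by move=> Y /supp_restr_code.
  - by move=> Y; apply: wt_restr_code_gt.
  - by rewrite dimD -dimC cardE' (in_topology_dim topC).
  - rewrite cardE' (leq_ltn_trans le_h) // ltn_subrL muln_gt0 !subn_gt0 lt_am lt_bn.
    by rewrite leq_max subn_gt0 lt_am.
have cardE'C : m * n - #|E'| = #|~: E'|.
  by rewrite -(addKn #|E'| #|~: E'|) cardsC card_prod !card_ord.
by split=> //; rewrite cardE'C -dimDh dimD addKn addn1.
Qed.
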